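(* Fix $k\ge3$, $c>0$ and $\zeta\in(0,1]$ with $\zeta(k-1)c^{k-1}<e$. Let $F=F^{(k)}_{c,\zeta}$. Then for all bounded measurable $f,g:[0,1]\to\mathbb R_{>0}$, $$\|\log F^2(f)-\log F^2(g)\|_\infty\le(1-\delta)\|\log f-\log g\|_\infty,\qquad\delta=1-\zeta c^{k-1}(k-1)e^{-1}.$$
   Context: $\alpha_k=\frac12\sum_{i=1}^k\min\left(\frac1{i-1},\frac1{k-i}\right)$ (with $1/0=+\infty$). For $\ell\in\{1,\dots,k\}$, $I_\ell=\{-\ell+1,\dots,k-\ell\}\setminus\{0\}$ and $w(t,\ell)=\min\{\frac t{\ell-1},\frac{1-t}{k-\ell}\}$ (quotients by $0$ are $+\infty$). The operator $F^{(k)}_{c,\zeta}$ on bounded measurable $f:[0,1]\to\mathbb R_{>0}$ is $F^{(k)}_{c,\zeta}f(t)=c\exp\left[-\frac{\zeta}{\alpha_k}\sum_{\ell=1}^k\int_0^{w(t,\ell)}\prod_{i\in I_\ell}f(t+is)\,ds\right]$. $F^2=F\circ F$; $\|\cdot\|_\infty$ is the supremum norm. *)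

From HB Require Import structures.
From mathcomp Require Import all_boot all_order all_algebra.
From mathcomp Require Import all_classical all_reals all_analysis.
Set Implicit Arguments. Unset Strict Implicit. Unset Printing Implicit Defensive.
Import Order.TTheory GRing.Theory Num.Theory.
Import numFieldNormedType.Exports.
Local Open Scope classical_set_scope.
Local Open Scope ring_scope.

Section Defs.
Variable R : realType.

Definition qinf (x y : R) : \bar R := if y == 0 then +oo%E else (x / y)%:E.

Definition alpha (k : nat) : R :=
  2^-1 * \sum_(1 <= i < k.+1)
     fine (Order.min (qinf 1 (i - 1)%:R) (qinf 1 (k - i)%:R)).

Definition wfun (k : nat) (t : R) (l : nat) : R :=
  fine (Order.min (qinf t (l - 1)%:R) (qinf (1 - t) (k - l)%:R)).

(* prod_{i in I_l} f(t + i s), with I_l = {-l+1,...,k-l} \ {0},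
   indexed as i = j - (l-1) for j = 0..k-1, j <> l-1 *)
Definition prodI (k l : nat) (f : R -> R) (t s : R) : R :=
  \prod_(0 <= j < k | j != (l - 1)%N)
     f (t + ((j%:Z - (l - 1)%:Z)%:~R) * s).

Definition Fop (k : nat) (c zeta : R) (f : R -> R) : R -> R :=
  fun t => c * expR (- (zeta / alpha k) *
     \sum_(1 <= l < k.+1)
        Rintegral lebesgue_measure `[0, wfun k t l] (fun s => prodI k l f t s)).

Definition supnorm (h : R -> R) : \bar R :=
  ereal_sup ((fun x => (`|h x|)%:E) @` `[0, 1]).

End Defs.

(* Write [F u = c exp (- (zeta / alpha_k) Fsum u)], where [Fsum u t] sums over
   [l] the integrals over [0 <= s <= w(t,l)] of the products of the [k - 1]
   values [u (t + i s)], [i \in I_l]; the bound [w] keeps these points in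
   [0,1], and [sum_l w(t,l) <= alpha_k] by pairing [t] with [1 - t].
   If [|log u - log v| <= e] on [0,1], then [Fsum u <= e^((k-1)e) Fsum v] and
   conversely. As [x e^-x <= 1/e], [|e^-a - e^-b| <= |log a - log b| / e], so
   the products built from [F u] and [F v], each of the form
   [c^(k-1) exp (- (zeta / alpha_k) sum_i Fsum (t + i s))], differ by at most
   [c^(k-1) (k-1) e / e]. Integrating over [s] and summing over [l] gives
   [|Fsum (F u) - Fsum (F v)| <= alpha_k c^(k-1) (k-1) e / e], and [log F] is
   affine in [Fsum] with slope [- zeta / alpha_k]. *)

From HB Require Import structures.
From mathcomp Require Import all_boot all_order all_algebra.
From mathcomp Require Import all_classical all_reals all_analysis.
From mathcomp Require Import zify ring lra.
From mathcomp Require Import measurable_realfun lebesgue_integral_fubini lebesgue_Rintegral.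
Import Order.TTheory GRing.Theory Num.Theory.
Import numFieldNormedType.Exports.
Local Open Scope classical_set_scope.
Local Open Scope ring_scope.
Set Implicit Arguments. Unset Strict Implicit. Unset Printing Implicit Defensive.

Section Weights.
Variable R : realType.
Implicit Types (t : R) (k l : nat).

Lemma fine_min_qinf (x y : R) (a b : nat) : (0 < a + b)%N ->
  fine (Order.min (qinf x a%:R) (qinf y b%:R)) =
  if a == 0%N then y / b%:R else if b == 0%N then x / a%:R
  else Num.min (x / a%:R) (y / b%:R).
Proof.
move=> ab0; rewrite /qinf !pnatr_eq0.
case: a ab0 => [|a]; case: b => [|b] // _; rewrite ?eqxx /=.
- by rewrite miney.
- by rewrite -EFin_min.
Qed.

Lemma wfunE k l t : (2 <= k)%N ->
  wfun k t l = if (l - 1 == 0)%N then (1 - t) / (k - l)%:R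
    else if (k - l == 0)%N then t / (l - 1)%:R
    else Num.min (t / (l - 1)%:R) ((1 - t) / (k - l)%:R).
Proof. by move=> k2; rewrite /wfun fine_min_qinf //; lia. Qed.

Lemma wfun_bounds k l t : (2 <= k)%N -> (1 <= l <= k)%N -> 0 <= t <= 1 ->
  [/\ 0 <= wfun k t l, (l - 1)%:R * wfun k t l <= t
    & (k - l)%:R * wfun k t l <= 1 - t].
Proof.
move=> k2 lk /andP[t0 t1]; have t1' : 0 <= 1 - t by rewrite subr_ge0.
have divfK_nat (n : nat) x : (0 < n)%N -> n%:R * (x / n%:R) = x :> R.
  by move=> n0; rewrite mulrC divfK // pnatr_eq0 -lt0n.
rewrite wfunE //; case: eqP => [a0|/eqP a0].
  by rewrite a0 mul0r divr_ge0 // divfK_nat //; lia.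
case: eqP => [b0|/eqP b0].
  by rewrite b0 mul0r subr_ge0 divr_ge0 // divfK_nat //; lia.
split; first by rewrite le_min !divr_ge0.
- by rewrite -[leRHS](@divfK_nat (l - 1)%N) ?ler_wpM2l ?ge_min ?lexx //; lia.
- by rewrite -[leRHS](@divfK_nat (k - l)%N) ?ler_wpM2l ?ge_min ?lexx ?orbT //; lia.
Qed.

Lemma wfun_ge0 k l t : (2 <= k)%N -> (1 <= l <= k)%N -> 0 <= t <= 1 ->
  0 <= wfun k t l.
Proof. by move=> k2 lk t01; have [] := wfun_bounds k2 lk t01. Qed.

Lemma wfun_shift_in01 k l j t s : (2 <= k)%N -> (1 <= l <= k)%N -> (j < k)%N ->
  0 <= t <= 1 -> 0 <= s <= wfun k t l ->
  0 <= t + (j%:Z - (l - 1)%:Z)%:~R * s <= 1.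
Proof.
move=> k2 lk jk t01 /andP[s0 sw].
have [w0 lw kw] := wfun_bounds k2 lk t01.
rewrite intrD intrN -!pmulrn.
have jlk : j%:R <= (l - 1)%:R + (k - l)%:R :> R by rewrite -natrD ler_nat; lia.
have j0 : 0 <= j%:R :> R by [].
have ls : (l - 1)%:R * s <= (l - 1)%:R * wfun k t l by rewrite ler_wpM2l.
have ks : (k - l)%:R * s <= (k - l)%:R * wfun k t l by rewrite ler_wpM2l.
move: t01 => /andP[t0 t1]; apply/andP; split; nra.
Qed.

Lemma wfunD_oneminus_le k l t : (2 <= k)%N -> (1 <= l <= k)%N ->
  wfun k t l + wfun k (1 - t) l <=
  fine (Order.min (qinf 1 (l - 1)%:R) (qinf 1 (k - l)%:R)).
Proof.
move=> k2 lk; rewrite !wfunE // fine_min_qinf; last by lia.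
rewrite subKr.
case: eqP => _; first by rewrite -mulrDl subrK.
case: eqP => _; first by rewrite -mulrDl addrC subrK.
have min_add (x y z w : R) : Num.min x y + Num.min z w <= Num.min (x + z) (y + w).
  by rewrite le_min !lerD // ge_min lexx ?orbT.
by apply: le_trans (min_add _ _ _ _) _; rewrite -!mulrDl subrKC subrK.
Qed.

(* The reflection [l -> k + 1 - l] exchanges the two quotients in [w]. *)
Lemma sum_wfun_oneminus k t :
  \sum_(1 <= l < k.+1) wfun k (1 - t) l = \sum_(1 <= l < k.+1) wfun k t l.
Proof.
rewrite big_nat_rev /=; apply: eq_big_nat => l /andP[l1 lk].
rewrite /wfun minC subKr.
have -> : (1 + k.+1 - l.+1 - 1 = k - l)%N by lia.
by have -> : (k - (1 + k.+1 - l.+1) = l - 1)%N by lia.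
Qed.

Lemma sum_wfun_le_alpha k t : (2 <= k)%N ->
  \sum_(1 <= l < k.+1) wfun k t l <= alpha R k.
Proof.
move=> k2; have -> : \sum_(1 <= l < k.+1) wfun k t l =
    2^-1 * \sum_(1 <= l < k.+1) (wfun k t l + wfun k (1 - t) l).
  by rewrite big_split /= sum_wfun_oneminus; lra.
rewrite ler_wpM2l ?invr_ge0 //; apply: ler_sum_nat => l lk.
by apply: wfunD_oneminus_le => //; lia.
Qed.

Lemma alpha_gt0 k : (2 <= k)%N -> 0 < alpha R k.
Proof.
move=> k2; rewrite /alpha mulr_gt0 ?invr_gt0 // big_nat_recl; last by lia.
rewrite ltr_pwDl //.
- by rewrite fine_min_qinf /=; [rewrite divr_gt0 // ltr0n; lia | lia].
- rewrite sumr_ge0 // => i _; rewrite fine_min_qinf; last by lia.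
  by do 2?case: eqP => _; rewrite ?le_min ?divr_ge0.
Qed.

End Weights.

Section ExpEstimate.
Variable R : realType.
Implicit Types a b x eta : R.

Lemma mulr_expRN_le x : x * expR (- x) <= expR (-1).
Proof.
have -> : expR (-1) = expR (x - 1) * expR (- x) by rewrite -expRD; congr expR; ring.
by rewrite ler_wpM2r ?expR_ge0 //; have := expR_ge1Dx (x - 1); lra.
Qed.

(* Mean value theorem for [v |-> exp (- exp v)], whose derivative is
   [- e^v exp (- e^v)], bounded by [e^-1] in absolute value. *)
Lemma expRN_sub_le_ln a b : 0 < b -> b <= a ->
  expR (- b) - expR (- a) <= (ln a - ln b) * expR (-1).
Proof.
move=> b0 ba; have a0 : 0 < a by apply: lt_le_trans ba.
pose psi := expR \o (fun v : R => - expR v).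
have dpsi v : is_derive v (1 : R) psi (expR (- expR v) * (- expR v)).
  exact: is_derive1_comp.
have psi_ln x : 0 < x -> psi (ln x) = expR (- x) by move=> x0; rewrite /psi /= lnK.
rewrite -psi_ln // -psi_ln //.
have [lnE|lnN] := eqVneq (ln b) (ln a); first by rewrite lnE !subrr mul0r.
have lt_ln : ln b < ln a by rewrite lt_neqAle lnN ler_ln.
have cpsi : {within `[ln b, ln a], continuous psi}.
  apply/continuous_subspaceT => v.
  by apply/differentiable_continuous/derivable1_diffP; have [] := dpsi v.
have [xi _ mvt] := MVT lt_ln (fun x _ => dpsi x) cpsi.
rewrite -opprB mvt -mulNr [leRHS]mulrC ler_wpM2r ?subr_ge0 ?ler_ln //.
by rewrite mulrN opprK mulrC mulr_expRN_le.
Qed.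

Lemma normr_expRN_sub_le a b eta : 0 <= eta -> 0 <= a -> 0 <= b ->
  a <= expR eta * b -> b <= expR eta * a ->
  `|expR (- a) - expR (- b)| <= eta * expR (-1).
Proof.
move=> eta0; wlog le_ba : a b / b <= a.
  move=> H a0 b0 ab ba; have [le_ba|/ltW le_ab] := leP b a; first exact: H.
  by rewrite distrC; apply: H.
move=> a0 b0 ab _; rewrite distrC ger0_norm; last first.
  by rewrite subr_ge0 ler_expR lerN2.
have [b_eq0|b_gt0] := eqVneq b 0.
  have a_eq0 : a = 0 by apply/le_anti; rewrite a0 -(mulr0 (expR eta)) -b_eq0 ab.
  by rewrite a_eq0 b_eq0 subrr mulr_ge0 ?expR_ge0.
have b_gt0' : 0 < b by rewrite lt_neqAle eq_sym b_gt0.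
apply: le_trans (expRN_sub_le_ln b_gt0' le_ba) _.
rewrite ler_wpM2r ?expR_ge0 // lerBlDr -[eta]expRK -lnM ?posrE ?expR_gt0 //.
by rewrite ler_ln ?posrE ?mulr_gt0 ?expR_gt0 // (lt_le_trans b_gt0').
Qed.

Lemma ler_expR_mul_of_ln (a b e : R) : 0 < a -> 0 < b ->
  `|ln a - ln b| <= e -> a <= expR e * b.
Proof.
move=> a0 b0; rewrite ler_norml => /andP[_ le_ab].
by rewrite -(lnK a0) -(lnK b0) -expRD ler_expR; lra.
Qed.

End ExpEstimate.

Section Integral.
Variable R : realType.
Notation mu := (@lebesgue_measure R).

Lemma integrable_itv_bounded (h : R -> R) (a b M : R) : measurable_fun setT h ->
  (forall x, `|h x| <= M) -> mu.-integrable `[a, b] (EFin \o h).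
Proof.
move=> mh h_bd; have ab_fin : (mu `[a, b] < +oo)%E.
  by rewrite lebesgue_measure_itv; case: ifP => _; rewrite ?ltry.
apply: measurable_bounded_integrable => //.
  exact: measurable_funS mh.
exists M; split; first by rewrite num_real.
by move=> M' M'M x _ /=; apply: le_trans (h_bd x) _; exact: ltW.
Qed.

Lemma normr_Rintegral_itv_sub_le (f g : R -> R) (a b D Mf Mg : R) : a <= b ->
  measurable_fun setT f -> measurable_fun setT g ->
  (forall x, `|f x| <= Mf) -> (forall x, `|g x| <= Mg) ->
  (forall x, a <= x <= b -> `|f x - g x| <= D) ->
  `|Rintegral mu `[a, b] f - Rintegral mu `[a, b] g| <= D * (b - a).
Proof.
move=> ab mf mg f_bd g_bd fg.
have if_ := integrable_itv_bounded a b mf f_bd.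
have ig := integrable_itv_bounded a b mg g_bd.
have mfg : measurable_fun setT (f \- g) by apply: measurable_funB.
have fg_bd x : `|(f \- g) x| <= Mf + Mg.
  by apply: le_trans (ler_normB _ _) _; apply: lerD.
rewrite -RintegralB //; apply: le_trans (le_normr_Rintegral _ _) _ => //.
  exact: integrable_itv_bounded fg_bd.
apply: le_trans (_ : _ <= Rintegral mu `[a, b] (fun=> D)) _.
  apply: le_Rintegral => //.
  - apply: (@integrable_itv_bounded _ a b (Mf + Mg)) => [|x].
      exact: measurableT_comp.
    by rewrite normr_id; apply: fg_bd.
  - exact: (@integrable_itv_bounded _ a b `|D|).
have mu_ab : fine (mu (`[a, b]%classic : set R)) = b - a.
  rewrite lebesgue_measure_itv /= lte_fin.
  case: ltP => //= ba.
  by apply/esym/eqP; rewrite subr_eq0 eq_le ab ba.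
by rewrite Rintegral_cst // mu_ab.
Qed.

End Integral.

Section Operator.
Variable R : realType.
Notation mu := (@lebesgue_measure R).
Variable k : nat.
Implicit Types (l : nat) (u v : R -> R) (t s : R).

Definition Fsum u t : R :=
  \sum_(1 <= l < k.+1) Rintegral mu `[0, wfun k t l] (fun s => prodI k l u t s).

Lemma FopE (c zeta : R) u t :
  Fop k c zeta u t = c * expR (- (zeta / alpha R k) * Fsum u t).
Proof. by []. Qed.

Lemma prod_index_neq_cst l (x : R) : (1 <= l <= k)%N ->
  \prod_(0 <= j < k | j != (l - 1)%N) x = x ^+ (k - 1).
Proof.
move=> lk; rewrite big_const_seq -iter_mulr_1; congr iter.
have := count_predC (pred1 (l - 1)%N) (index_iota 0 k).
rewrite /index_iota subn0 size_iota (count_uniq_mem _ (iota_uniq 0 k)) mem_iota.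
rewrite (_ : (0 <= l - 1 < 0 + k)%N) //=; last by lia.
(* [set] abstracts both (convertible) counts, so that [lia] sees one atom. *)
by set c := count (predC _) _; lia.
Qed.

Lemma prodI_bounds l u (M : R) t s : (1 <= l <= k)%N ->
  (forall x, 0 <= u x <= M) -> 0 <= prodI k l u t s <= M ^+ (k - 1).
Proof.
move=> lk u_bd; rewrite -(prod_index_neq_cst M lk) prodr_ge0 ?ler_prod //= => j _.
  by case/andP: (u_bd (t + (j%:Z - (l - 1)%:Z)%:~R * s)).
Qed.

Lemma prodI_scale l (r : R) u t s : (1 <= l <= k)%N ->
  prodI k l (fun x => r * u x) t s = r ^+ (k - 1) * prodI k l u t s.
Proof. by move=> lk; rewrite /prodI big_split /= prod_index_neq_cst. Qed.

Lemma prodI_Fop l (c zeta : R) u t s : (1 <= l <= k)%N ->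
  prodI k l (Fop k c zeta u) t s = c ^+ (k - 1) *
    expR (- (zeta / alpha R k * \sum_(0 <= j < k | j != (l - 1)%N)
        Fsum u (t + (j%:Z - (l - 1)%:Z)%:~R * s))).
Proof.
move=> lk; rewrite /prodI big_split /= prod_index_neq_cst // -expR_sum.
by rewrite mulr_sumr -sumrN; congr (_ * expR _); apply: eq_bigr => j _; rewrite mulNr.
Qed.

Lemma Fsum_ge0 u t : (forall x, 0 <= u x) -> 0 <= Fsum u t.
Proof.
move=> u0; rewrite sumr_ge0 // => l _; apply: Rintegral_ge0 => s _.
by rewrite prodr_ge0.
Qed.

Lemma measurable_prodI l u : measurable_fun setT u ->
  measurable_fun setT (fun z : R * R => prodI k l u z.1 z.2).
Proof.
move=> mu_; rewrite /prodI; under eq_fun do rewrite big_mkcond /=.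
apply: measurable_prod => j _; case: (j != _); last exact: measurable_cst.
apply: measurableT_comp => //; apply: measurable_funD => //.
exact: measurable_funM measurable_snd.
Qed.

Lemma integrable_prodI l u (M : R) : (1 <= l <= k)%N ->
  measurable_fun setT u -> (forall x, 0 <= u x <= M) ->
  forall t, mu.-integrable `[0, wfun k t l] (EFin \o (fun s => prodI k l u t s)).
Proof.
move=> lk mu_ u_bd t.
apply: (@integrable_itv_bounded _ _ 0 (wfun k t l) (M ^+ (k - 1))).
  exact: measurable_fun_pair2 t (measurable_prodI l mu_).
by move=> s; have /andP[p0 pM] := prodI_bounds t s lk u_bd; rewrite ger0_norm.
Qed.

Hypothesis k2 : (2 <= k)%N.

Lemma ler_prodI l u v t s : (1 <= l <= k)%N -> 0 <= t <= 1 ->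
  0 <= s <= wfun k t l -> (forall x, 0 <= u x) ->
  (forall x, 0 <= x <= 1 -> u x <= v x) -> prodI k l u t s <= prodI k l v t s.
Proof.
move=> lk t01 sw u0 uv; rewrite /prodI big_seq_cond [leRHS]big_seq_cond.
apply: ler_prod => j /andP[]; rewrite mem_index_iota => /andP[_ jk] _.
by rewrite u0 uv // (wfun_shift_in01 k2 lk jk t01 sw).
Qed.

Lemma eq_prodI l u v t s : (1 <= l <= k)%N -> 0 <= t <= 1 ->
  0 <= s <= wfun k t l -> (forall x, 0 <= x <= 1 -> u x = v x) ->
  prodI k l u t s = prodI k l v t s.
Proof.
move=> lk t01 sw uv; rewrite /prodI big_seq_cond [RHS]big_seq_cond.
apply: eq_bigr => j /andP[]; rewrite mem_index_iota => /andP[_ jk] _.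
by rewrite uv // (wfun_shift_in01 k2 lk jk t01 sw).
Qed.

Lemma Fop_bounds (c zeta : R) u : 0 < c -> 0 <= zeta ->
  (forall x, 0 <= u x) -> forall x, 0 <= Fop k c zeta u x <= c.
Proof.
move=> c0 z0 u0 x; rewrite FopE mulr_ge0 ?expR_ge0 ?(ltW c0) //=.
rewrite ger_pMr // expR_le1 mulNr oppr_le0 mulr_ge0 ?Fsum_ge0 //.
by rewrite divr_ge0 // ltW // alpha_gt0.
Qed.

Lemma Fop_ext01 (c zeta : R) u v t : (forall x, 0 <= x <= 1 -> u x = v x) ->
  0 <= t <= 1 -> Fop k c zeta u t = Fop k c zeta v t.
Proof.
move=> uv t01; rewrite !FopE /Fsum; congr (c * expR (_ * _)).
apply: eq_big_nat => l lk; apply: eq_Rintegral => s.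
by rewrite inE /= in_itv /= => sw; apply: eq_prodI.
Qed.

Lemma measurable_wfun l : measurable_fun setT (fun t : R => wfun k t l).
Proof.
under eq_fun do rewrite wfunE //.
have m1 : measurable_fun setT (fun t : R => (1 - t) / (k - l)%:R).
  by apply: measurable_funM => //; apply: measurable_funB.
have m2 : measurable_fun setT (fun t : R => t / (l - 1)%:R) by apply: measurable_funM.
by do 2?case: eqP => _ //; apply: measurable_minr.
Qed.

(* Tonelli: the integral over [[0, w(t,l)]] is a partial integral of a
   nonnegative measurable function on the product [R * R]. *)
Lemma measurable_Rintegral_prodI l u : measurable_fun setT u ->
  (forall x, 0 <= u x) ->
  measurable_fun setT (fun t => Rintegral mu `[0, wfun k t l] (fun s => prodI k l u t s)).
Proof.
move=> mu_ u0.
pose h (z : R * R) := (if (0 <= z.2) && (z.2 <= wfun k z.1 l)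
  then prodI k l u z.1 z.2 else 0)%:E.
have -> : (fun t => Rintegral mu `[0, wfun k t l] (fun s => prodI k l u t s)) =
    fine \o fubini_F mu h.
  apply/funext => t; rewrite /Rintegral /fubini_F integral_mkcond /=; congr fine.
  apply: eq_integral => s _; rewrite /patch /h /=.
  have [sw|sw] := boolP (0 <= s <= wfun k t l).
    by rewrite mem_set //= in_itv.
  by rewrite memNset //= in_itv; exact/negP.
apply: measurableT_comp => //; apply: measurable_fun_fubini_tonelli_F.
  apply/measurable_EFinP/measurable_fun_ifT; last exact: measurable_cst.
    apply: measurable_and; apply: measurable_fun_ler => //.
    exact: measurableT_comp (measurable_wfun l) measurable_fst.
  exact: measurable_prodI.
by move=> z; rewrite /h lee_fin; case: ifP => // _; rewrite prodr_ge0.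
Qed.

Lemma measurable_Fop (c zeta : R) u : measurable_fun setT u ->
  (forall x, 0 <= u x) -> measurable_fun setT (Fop k c zeta u).
Proof.
move=> mu_ u0; apply: measurable_funM => //.
apply: measurableT_comp; first exact: measurable_expR.
apply: measurable_funM => //; apply: measurable_sum => l.
exact: measurable_Rintegral_prodI.
Qed.

Lemma Fsum_le_scale u v (Mu Mv r : R) t :
  measurable_fun setT u -> measurable_fun setT v ->
  (forall x, 0 <= u x <= Mu) -> (forall x, 0 <= v x <= Mv) -> 0 <= r ->
  (forall x, 0 <= x <= 1 -> u x <= r * v x) -> 0 <= t <= 1 ->
  Fsum u t <= r ^+ (k - 1) * Fsum v t.
Proof.
move=> mu_ mv u_bd v_bd r0 uv t01.
have u0 x : 0 <= u x by case/andP: (u_bd x).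
have rv_bd x : 0 <= r * v x <= r * Mv.
  by case/andP: (v_bd x) => v0 vM; rewrite mulr_ge0 ?ler_wpM2l.
rewrite /Fsum mulr_sumr; apply: ler_sum_nat => l; rewrite ltnS => lk.
rewrite -(RintegralZl _ _ (integrable_prodI lk mv v_bd t)) //.
have -> : Rintegral mu `[0, wfun k t l] (fun s => r ^+ (k - 1) * prodI k l v t s) =
    Rintegral mu `[0, wfun k t l] (prodI k l (fun y => r * v y) t).
  by apply: eq_Rintegral => s _; rewrite -prodI_scale.
apply: le_Rintegral => //.
- exact: integrable_prodI lk mu_ u_bd t.
- exact: integrable_prodI lk (measurable_funM (measurable_cst r) mv) rv_bd t.
- by move=> s; rewrite /= in_itv /= => sw; apply: (ler_prodI lk t01 sw u0 uv).
Qed.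

Lemma normr_Fsum_sub_le u v (Mu Mv D : R) t : 0 <= t <= 1 ->
  measurable_fun setT u -> measurable_fun setT v ->
  (forall x, 0 <= u x <= Mu) -> (forall x, 0 <= v x <= Mv) -> 0 <= D ->
  (forall l, (1 <= l <= k)%N -> forall s, 0 <= s <= wfun k t l ->
     `|prodI k l u t s - prodI k l v t s| <= D) ->
  `|Fsum u t - Fsum v t| <= D * alpha R k.
Proof.
move=> t01 mu_ mv u_bd v_bd D0 uv; rewrite /Fsum -sumrB.
apply: le_trans (ler_norm_sum _ _ _) _.
apply: le_trans (_ : _ <= \sum_(1 <= l < k.+1) D * wfun k t l) _; last first.
  by rewrite -mulr_sumr ler_wpM2l // sum_wfun_le_alpha.
apply: ler_sum_nat => l; rewrite ltnS => lk; rewrite -[X in D * X]subr0.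
have prodI_norm w M s : (forall x, 0 <= w x <= M) -> `|prodI k l w t s| <= M ^+ (k - 1).
  by move=> w_bd; have /andP[p0 pM] := prodI_bounds t s lk w_bd; rewrite ger0_norm.
apply: (normr_Rintegral_itv_sub_le (Mf := Mu ^+ (k - 1)) (Mg := Mv ^+ (k - 1))).
- exact: wfun_ge0.
- exact: measurable_fun_pair2 t (measurable_prodI l mu_).
- exact: measurable_fun_pair2 t (measurable_prodI l mv).
- by move=> s; apply: prodI_norm.
- by move=> s; apply: prodI_norm.
- exact: uv.
Qed.

Lemma normr_prodI_Fop_sub_le (c zeta eta : R) u v l t s : 0 <= c -> 0 < zeta ->
  0 <= eta -> (forall x, 0 <= u x) -> (forall x, 0 <= v x) ->
  (forall y, 0 <= y <= 1 -> Fsum u y <= expR eta * Fsum v y) ->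
  (forall y, 0 <= y <= 1 -> Fsum v y <= expR eta * Fsum u y) ->
  (1 <= l <= k)%N -> 0 <= t <= 1 -> 0 <= s <= wfun k t l ->
  `|prodI k l (Fop k c zeta u) t s - prodI k l (Fop k c zeta v) t s|
    <= c ^+ (k - 1) * (eta * expR (-1)).
Proof.
move=> c0 z0 eta0 u0 v0 uv vu lk t01 sw.
have za0 : 0 <= zeta / alpha R k by rewrite divr_ge0 ?ltW ?alpha_gt0.
pose S w := zeta / alpha R k * \sum_(0 <= j < k | j != (l - 1)%N)
  Fsum w (t + (j%:Z - (l - 1)%:Z)%:~R * s).
have S_ge0 w : (forall x, 0 <= w x) -> 0 <= S w.
  by move=> w0; rewrite mulr_ge0 // sumr_ge0 // => j _; apply: Fsum_ge0.
have S_le w1 w2 : (forall y, 0 <= y <= 1 -> Fsum w1 y <= expR eta * Fsum w2 y) ->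
    S w1 <= expR eta * S w2.
  move=> w12; rewrite /S mulrCA ler_wpM2l // mulr_sumr big_seq_cond.
  rewrite [leRHS]big_seq_cond; apply: ler_sum => j /andP[].
  by rewrite mem_index_iota => /andP[_ jk] _; apply/w12/(wfun_shift_in01 k2 lk).
rewrite !prodI_Fop // -mulrBr normrM ger0_norm ?exprn_ge0 // ler_wpM2l ?exprn_ge0 //.
exact: normr_expRN_sub_le (S_ge0 _ u0) (S_ge0 _ v0) (S_le _ _ uv) (S_le _ _ vu).
Qed.

Lemma normr_ln_Fop_sub (c zeta : R) u v t : 0 < c -> 0 <= zeta ->
  `|ln (Fop k c zeta u t) - ln (Fop k c zeta v t)|
    = zeta / alpha R k * `|Fsum u t - Fsum v t|.
Proof.
move=> c0 z0; rewrite !FopE !lnM ?posrE ?expR_gt0 // !expRK.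
rewrite opprD addrACA subrr add0r -mulrBr mulNr -mulrN normrM normrN.
by rewrite (@ger0_norm _ (zeta / alpha R k)) // divr_ge0 // ltW // alpha_gt0.
Qed.

Lemma normr_ln_Fop2_sub_le (c zeta e Mu Mv : R) u v t : 0 < c -> 0 < zeta -> 0 <= e ->
  measurable_fun setT u -> measurable_fun setT v ->
  (forall x, 0 <= u x <= Mu) -> (forall x, 0 <= v x <= Mv) ->
  (forall x, 0 <= x <= 1 -> u x <= expR e * v x) ->
  (forall x, 0 <= x <= 1 -> v x <= expR e * u x) -> 0 <= t <= 1 ->
  `|ln (Fop k c zeta (Fop k c zeta u) t) - ln (Fop k c zeta (Fop k c zeta v) t)|
    <= zeta * c ^+ (k - 1) * (k - 1)%:R * (expR 1)^-1 * e.
Proof.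
move=> c0 z0 e0 mu_ mv u_bd v_bd uv vu t01.
have u0 x : 0 <= u x by case/andP: (u_bd x).
have v0 x : 0 <= v x by case/andP: (v_bd x).
have eta0 : 0 <= (k - 1)%:R * e by rewrite mulr_ge0.
have Fsum_uv y : 0 <= y <= 1 -> Fsum u y <= expR ((k - 1)%:R * e) * Fsum v y.
  by rewrite expRM_natl; apply: Fsum_le_scale; rewrite ?expR_ge0.
have Fsum_vu y : 0 <= y <= 1 -> Fsum v y <= expR ((k - 1)%:R * e) * Fsum u y.
  by rewrite expRM_natl; apply: Fsum_le_scale; rewrite ?expR_ge0.
have Fsum_FuFv : `|Fsum (Fop k c zeta u) t - Fsum (Fop k c zeta v) t|
    <= c ^+ (k - 1) * ((k - 1)%:R * e * expR (-1)) * alpha R k.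
  apply: (normr_Fsum_sub_le t01 (measurable_Fop c zeta mu_ u0)
    (measurable_Fop c zeta mv v0) (Fop_bounds c0 (ltW z0) u0)
    (Fop_bounds c0 (ltW z0) v0)).
    by rewrite !mulr_ge0 ?exprn_ge0 ?expR_ge0 // ltW.
  move=> l lk s sw.
  exact: normr_prodI_Fop_sub_le (ltW c0) z0 eta0 u0 v0 Fsum_uv Fsum_vu lk t01 sw.
rewrite normr_ln_Fop_sub ?(ltW z0) //.
apply: le_trans (ler_wpM2l _ Fsum_FuFv) _; first by rewrite divr_ge0 ?ltW ?alpha_gt0.
have alpha_neq0 : alpha R k != 0 by rewrite gt_eqF ?alpha_gt0.
rewrite [leLHS](_ : _ = zeta * c ^+ (k - 1) * (k - 1)%:R / expR 1 * e) //.
by rewrite expRN; field; rewrite alpha_neq0 gt_eqF ?expR_gt0.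
Qed.

End Operator.

Section UnitInterval.
Variable R : realType.

Lemma supnorm_le_mul (h1 h2 : R -> R) (q : R) : 0 < q ->
  (forall e, (forall x, 0 <= x <= 1 -> `|h2 x| <= e) ->
     forall t, 0 <= t <= 1 -> `|h1 t| <= q * e) ->
  (supnorm h1 <= q%:E * supnorm h2)%E.
Proof.
move=> q0 h12.
have h2_le x : 0 <= x <= 1 -> (`|h2 x|%:E <= supnorm h2)%E.
  by move=> x01; apply: ereal_sup_ubound; exists x; rewrite //= in_itv.
case E : (supnorm h2) => [e| |].
- apply: ge_ereal_sup => _ [t t01 <-]; rewrite -EFinM lee_fin.
  apply: h12; last by move: t01; rewrite /= in_itv.
  by move=> x x01; rewrite -lee_fin -E h2_le.
- by rewrite gt0_muley ?leey // lte_fin.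
- by have := h2_le 0; rewrite E leeNy_eq lexx ler01 => /(_ isT).
Qed.

Lemma measurable_extension01 (f : R -> R) :
  measurable_fun (`[0, 1] : set R) f ->
  (forall x, x \in `[0, 1] -> 0 < f x) ->
  (exists M, forall x, x \in `[0, 1] -> f x <= M) ->
  exists (u : R -> R) (M : R), [/\ measurable_fun setT u, forall x, 0 <= u x <= M
    & forall x, 0 <= x <= 1 -> u x = f x].
Proof.
move=> mf f0 [M fM]; exists (f \_ `[0, 1]), M.
have M0 : 0 <= M by apply/(le_trans (ltW (f0 0 _)))/fM; rewrite in_itv /= lexx ler01.
split.
- by apply/(measurable_restrictT f (measurable_itv _)).
- move=> x; rewrite /patch; case: ifPn => [/set_mem x01|_]; last by rewrite /point /= lexx M0.
  by rewrite ltW ?f0 ?fM.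
- by move=> x x01; rewrite /patch mem_set.
Qed.

End UnitInterval.

Theorem mainTheorem20 (R : realType) (k : nat) (c zeta : R)
  (hk : (3 <= k)%N) (hc : 0 < c) (hz0 : 0 < zeta) (hz1 : zeta <= 1)
  (hcond : zeta * (k - 1)%:R * c ^+ (k - 1) < expR 1)
  (f g : R -> R)
  (fmeas : measurable_fun (`[0, 1] : set R) f)
  (gmeas : measurable_fun (`[0, 1] : set R) g)
  (fpos : forall x, x \in `[0, 1] -> 0 < f x)
  (gpos : forall x, x \in `[0, 1] -> 0 < g x)
  (fbdd : exists M : R, forall x, x \in `[0, 1] -> f x <= M)
  (gbdd : exists M : R, forall x, x \in `[0, 1] -> g x <= M) :
  let F := Fop k c zeta in
  let delta := 1 - zeta * c ^+ (k - 1) * (k - 1)%:R * (expR 1)^-1 in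
  (supnorm (fun t => (ln (F (F f) t) - ln (F (F g) t))%R)
    <= (1 - delta)%:E * supnorm (fun t => (ln (f t) - ln (g t))%R))%E.
Proof.
cbv zeta; have k2 : (2 <= k)%N by lia.
have [u [Mu [mu_ u_bd uf]]] := measurable_extension01 fmeas fpos fbdd.
have [v [Mv [mv v_bd vg]]] := measurable_extension01 gmeas gpos gbdd.
rewrite subKr; apply: supnorm_le_mul => [|e fg t t01].
  by rewrite !mulr_gt0 ?invr_gt0 ?expR_gt0 ?exprn_gt0 // ltr0n; lia.
have e0 : 0 <= e by apply: le_trans (fg 0 _); rewrite ?lexx ?ler01.
have FF_ext w h : (forall x, 0 <= x <= 1 -> w x = h x) ->
    Fop k c zeta (Fop k c zeta h) t = Fop k c zeta (Fop k c zeta w) t.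
  by move=> wh; do 2!apply: Fop_ext01 => // ? ?; rewrite wh.
rewrite (FF_ext _ _ uf) (FF_ext _ _ vg).
apply: (normr_ln_Fop2_sub_le k2 hc hz0 e0 mu_ mv u_bd v_bd _ _ t01) => x x01.
  by rewrite uf // vg // ler_expR_mul_of_ln ?fpos ?gpos ?in_itv ?fg.
by rewrite uf // vg // ler_expR_mul_of_ln ?fpos ?gpos ?in_itv // distrC fg.
Qed.
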